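(* Let $0<\delta<1$, $t>1$, $\lambda_c:=1/(t^{1-\delta}-1)$, $\lambda_c\le\lambda\le t^{1-\delta}-1$, $0<k<t^{\delta-1}$, and let $\phi$ satisfy $0<\phi<\pi/2$ if $\ln\lambda\ge0$ and $0<\phi<\arctan(\pi/|\ln\lambda|)$ if $\ln\lambda<0$. When $z$ lies on the contour $\{z=1-k+R{\rm e}^{{\rm i}\phi}:0\le R<\infty\}$, the function $F(z;\lambda)$ has non-negative imaginary part.
   Context: $F(z;\lambda):=(1-z)\ln(1-z)+z\ln z+z\ln\lambda$, with branch cuts $(-\infty,0]$ and $[1,\infty)$. *)

From Stdlib Require Import Reals.
From Coquelicot Require Import Coquelicot.
Open Scope R_scope.

Definition Carg (w : C) : R :=
  let x := Re w in let y := Im w in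
  if Rlt_dec 0 x then atan (y / x)
  else if Rlt_dec x 0 then
    (if Rle_dec 0 y then atan (y / x) + PI else atan (y / x) - PI)
  else if Rlt_dec 0 y then PI / 2
  else if Rlt_dec y 0 then - (PI / 2)
  else 0.

Definition Clog (w : C) : C := (ln (Cmod w), Carg w).

(* F(z; lambda) = (1-z) Log(1-z) + z Log z + z ln lambda,
   with principal branches (cuts (-oo,0] for Log z and [1,oo) for Log(1-z)). *)
Definition Ffun (z : C) (lam : R) : C :=
  Cplus (Cplus (Cmult (Cminus (RtoC 1) z) (Clog (Cminus (RtoC 1) z)))
               (Cmult z (Clog z)))
        (Cmult z (RtoC (ln lam))).

Definition contour (k phi r : R) : C := (1 - k + r * cos phi, r * sin phi).

From Stdlib Require Import Reals Lra.
From Coquelicot Require Import Coquelicot.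
Open Scope R_scope.

(* Along the ray z = 1 - k + r e^{iφ}, the r-derivative of Im F is Im (e^{iφ} F'(z)) with
   F'(z) = Log z - Log (1 - z) + ln λ, and its own derivative Im (e^{2iφ} / (z (1 - z))) has
   the sign of 2 k (1 - k) cos φ - r (1 - 2 k): the slope first rises, then falls.  It starts
   at sin φ ln (λ (1 - k) / k) >= 0, which is where λ >= λ_c and k < t^(δ-1) enter, and tends
   to π cos φ + sin φ ln λ > 0, which is what the bound on φ gives.  Hence the slope is
   nonnegative on [0, oo), and Im F, which vanishes at r = 0, is nondecreasing. *)

Lemma is_derive_nonneg_le (f df : R -> R) a b : a <= b ->
  (forall x, a <= x <= b -> is_derive f x (df x)) ->
  (forall x, a <= x <= b -> 0 <= df x) -> f a <= f b.
Proof.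
  intros Hab Hder Hpos.
  destruct (MVT_gen f a b df) as [x [Hx Hmvt]];
    rewrite ?Rmin_left, ?Rmax_right in * by lra.
  - intros x Hx. apply Hder. lra.
  - intros x Hx. apply continuity_pt_filterlim, (ex_derive_continuous (V := R_NormedModule)).
    exists (df x). now apply Hder.
  - enough (0 <= df x * (b - a)) by lra.
    apply Rmult_le_pos; [apply Hpos |]; lra.
Qed.

(* No positivity hypothesis: [ln] and [sqrt] both vanish on nonpositive reals. *)
Lemma ln_sqrt u : ln (sqrt u) = ln u / 2.
Proof.
  destruct (Rle_or_lt u 0) as [Hu | Hu].
  - rewrite sqrt_neg_0 by assumption.
    unfold ln. destruct (Rlt_dec 0 0) as [H0 | _]; [exfalso; exact (Rlt_irrefl 0 H0) |].
    destruct (Rlt_dec 0 u) as [Hu' | _]; [exfalso; lra | field].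
  - replace (ln u) with (ln (sqrt u * sqrt u)) by (now rewrite sqrt_sqrt by lra).
    rewrite ln_mult by (apply sqrt_lt_R0; lra). field.
Qed.

Lemma Carg_re_pos x y : 0 < x -> Carg (x, y) = atan (y / x).
Proof.
  intros Hx. unfold Carg. simpl. now destruct (Rlt_dec 0 x).
Qed.

Lemma Carg_im_neg x y : 0 < y -> Carg (x, - y) = - (PI / 2) + atan (x / y).
Proof.
  intros Hy. unfold Carg. simpl.
  destruct (Rlt_dec 0 x) as [Hx | Hx]; [| destruct (Rlt_dec x 0) as [Hx' | Hx']].
  - replace (- y / x) with (- / (x / y)) by (field; lra).
    rewrite atan_opp, atan_inv by (apply Rdiv_lt_0_compat; lra). ring.
  - destruct (Rle_dec 0 (- y)); [lra |].
    replace (- y / x) with (/ (- x / y)) by (field; lra).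
    replace (x / y) with (- (- x / y)) by (field; lra).
    rewrite atan_inv, atan_opp by (apply Rdiv_lt_0_compat; lra). lra.
  - replace x with 0 by lra.
    destruct (Rlt_dec 0 (- y)); [lra |]. destruct (Rlt_dec (- y) 0); [| lra].
    rewrite Rdiv_0_l, atan_0. ring.
Qed.

Lemma Im_mult_Clog x y :
  Im (Cmult (x, y) (Clog (x, y))) = x * Carg (x, y) + y * (ln (x ^ 2 + y ^ 2) / 2).
Proof.
  unfold Clog, Cmod. simpl. rewrite ln_sqrt. field.
Qed.

Lemma sum_sq_pos a b : 0 < a \/ 0 < b -> 0 < a ^ 2 + b ^ 2.
Proof.
  intros Hab. pose proof (pow2_ge_0 a). pose proof (pow2_ge_0 b). destruct Hab; nra.
Qed.

Ltac positivity_side := repeat split; try apply Rgt_not_eq; nra.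

Section Ray.

(* The ray is z = 1 - k + r (c + i s), and L stands for ln λ; the direction (c, s) need not
   be a unit vector. *)
Variables k c s L : R.
Hypotheses (k_pos : 0 < k) (k_lt_1 : k < 1) (c_pos : 0 < c) (s_pos : 0 < s).

Definition arg_one_minus (r : R) : R := Carg (k - r * c, - (r * s)).

Definition log_modulus_gap (r : R) : R :=
  (ln ((1 - k + r * c) ^ 2 + (r * s) ^ 2) - ln ((k - r * c) ^ 2 + (r * s) ^ 2)) / 2.

Definition im_ray (r : R) : R :=
  (k - r * c) * arg_one_minus r + (1 - k + r * c) * atan (r * s / (1 - k + r * c))
  + r * s * (L + log_modulus_gap r).

Definition slope (r : R) : R :=
  c * (atan (r * s / (1 - k + r * c)) - arg_one_minus r) + s * (L + log_modulus_gap r).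

Definition curvature (r : R) : R :=
  s * (2 * c * k * (1 - k) - r * (1 - 2 * k) * (c ^ 2 + s ^ 2))
  / (((1 - k + r * c) ^ 2 + (r * s) ^ 2) * ((k - r * c) ^ 2 + (r * s) ^ 2)).

Lemma re_z_pos r : 0 <= r -> 0 < 1 - k + r * c.
Proof. intros Hr. nra. Qed.

Lemma sqmod_z_pos r : 0 <= r -> 0 < (1 - k + r * c) ^ 2 + (r * s) ^ 2.
Proof. intros Hr. apply sum_sq_pos. left. nra. Qed.

Lemma sqmod_one_minus_z_pos r : 0 <= r -> 0 < (k - r * c) ^ 2 + (r * s) ^ 2.
Proof. intros [Hr | <-]; apply sum_sq_pos; [right | left]; nra. Qed.

Lemma arg_one_minus_0 : arg_one_minus 0 = 0.
Proof.
  unfold arg_one_minus. rewrite Carg_re_pos by lra.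
  replace (- (0 * s) / (k - 0 * c)) with 0 by (field; lra). apply atan_0.
Qed.

Lemma is_derive_arg_one_minus r : 0 <= r ->
  is_derive arg_one_minus r (- (k * s) / ((k - r * c) ^ 2 + (r * s) ^ 2)).
Proof.
  intros Hr. pose proof (sqmod_one_minus_z_pos r Hr).
  destruct Hr as [Hr | <-].
  - apply (is_derive_ext_loc (fun t => - (PI / 2) + atan ((k - t * c) / (t * s)))).
    + apply (filter_imp (fun t => 0 < t)); [| now apply open_gt].
      intros t Ht. unfold arg_one_minus. rewrite Carg_im_neg; [reflexivity | nra].
    + auto_derive; [| field]; positivity_side.
  - apply (is_derive_ext_loc (fun t => atan (- (t * s) / (k - t * c)))).
    + apply (filter_imp (fun t => t < k / c)).
      * intros t Ht. unfold arg_one_minus. rewrite Carg_re_pos; [reflexivity |].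
        apply Rmult_lt_compat_r with (r := c) in Ht; [| lra].
        replace (k / c * c) with k in Ht by (field; lra). lra.
      * apply open_lt, Rdiv_lt_0_compat; lra.
    + auto_derive; [| field]; positivity_side.
Qed.

Lemma Derive_arg_one_minus r : 0 <= r ->
  Derive arg_one_minus r = - (k * s) / ((k - r * c) ^ 2 + (r * s) ^ 2).
Proof. intros Hr. now apply is_derive_unique, is_derive_arg_one_minus. Qed.

Ltac derive_along_ray Hr :=
  pose proof (re_z_pos _ Hr); pose proof (sqmod_z_pos _ Hr);
  pose proof (sqmod_one_minus_z_pos _ Hr);
  auto_derive;
  [ repeat split; try (eexists; now apply is_derive_arg_one_minus); positivity_side
  | rewrite Derive_arg_one_minus by assumption;
    cbn [pow]; unfold Rminus, Rdiv; field; positivity_side ].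

Lemma is_derive_im_ray r : 0 <= r -> is_derive im_ray r (slope r).
Proof. intros Hr. unfold im_ray, slope, log_modulus_gap. derive_along_ray Hr. Qed.

Lemma is_derive_slope r : 0 <= r -> is_derive slope r (curvature r).
Proof. intros Hr. unfold slope, curvature, log_modulus_gap. derive_along_ray Hr. Qed.

(* The substitution v = 1 / r turns the limit of [slope] at infinity into [slope_tail 0]. *)
Definition slope_tail (v : R) : R :=
  c * (atan (s / ((1 - k) * v + c)) - PI / 2 - atan ((k * v - c) / s))
  + s * (ln (((1 - k) * v + c) ^ 2 + s ^ 2) - ln ((k * v - c) ^ 2 + s ^ 2)) / 2.

Lemma slope_tail_0 : slope_tail 0 = 0.
Proof.
  unfold slope_tail.
  replace (s / ((1 - k) * 0 + c)) with (/ (c / s)) by (field; lra).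
  replace ((k * 0 - c) / s) with (- (c / s)) by (field; lra).
  rewrite atan_inv, atan_opp by (apply Rdiv_lt_0_compat; lra).
  replace ((k * 0 - c) ^ 2) with (((1 - k) * 0 + c) ^ 2) by ring. field.
Qed.

Lemma slope_inv r : 0 < r -> slope r = c * PI + s * L + slope_tail (/ r).
Proof.
  intros Hr. unfold slope, slope_tail, log_modulus_gap, arg_one_minus.
  rewrite Carg_im_neg by nra.
  replace (r * s / (1 - k + r * c)) with (s / ((1 - k) * / r + c)) by (field; nra).
  replace ((k - r * c) / (r * s)) with ((k * / r - c) / s) by (field; lra).
  replace ((1 - k + r * c) ^ 2 + (r * s) ^ 2)
    with (r ^ 2 * (((1 - k) * / r + c) ^ 2 + s ^ 2)) by (field; lra).
  replace ((k - r * c) ^ 2 + (r * s) ^ 2)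
    with (r ^ 2 * ((k * / r - c) ^ 2 + s ^ 2)) by (field; lra).
  assert (0 < (1 - k) * / r) by (apply Rmult_lt_0_compat; [| apply Rinv_0_lt_compat]; lra).
  rewrite !ln_mult by (apply pow_lt || apply sum_sq_pos; auto).
  field.
Qed.

Definition slope_tail_deriv (v : R) : R :=
  s * v * ((1 - 2 * k) * (c ^ 2 + s ^ 2) - 2 * k * (1 - k) * c * v)
  / ((((1 - k) * v + c) ^ 2 + s ^ 2) * ((k * v - c) ^ 2 + s ^ 2)).

Lemma is_derive_slope_tail v : 0 <= v -> is_derive slope_tail v (slope_tail_deriv v).
Proof.
  intros Hv.
  assert (0 < ((1 - k) * v + c) ^ 2 + s ^ 2) by (apply sum_sq_pos; now right).
  assert (0 < (k * v - c) ^ 2 + s ^ 2) by (apply sum_sq_pos; now right).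
  unfold slope_tail, slope_tail_deriv.
  auto_derive; [| cbn [pow]; unfold Rminus, Rdiv; field]; positivity_side.
Qed.

Lemma im_ray_0 : im_ray 0 = 0.
Proof.
  unfold im_ray. rewrite arg_one_minus_0.
  replace (0 * s / (1 - k + 0 * c)) with 0 by (field; lra). rewrite atan_0. ring.
Qed.

Lemma slope_0 : slope 0 = s * (L + ln (1 - k) - ln k).
Proof.
  unfold slope, log_modulus_gap. rewrite arg_one_minus_0.
  replace (0 * s / (1 - k + 0 * c)) with 0 by (field; lra). rewrite atan_0.
  replace ((1 - k + 0 * c) ^ 2 + (0 * s) ^ 2) with ((1 - k) ^ 2) by ring.
  replace ((k - 0 * c) ^ 2 + (0 * s) ^ 2) with (k ^ 2) by ring.
  rewrite !ln_pow by lra. simpl. field.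
Qed.

Lemma curvature_nonneg r x : 0 <= x <= r ->
  r * (1 - 2 * k) * (c ^ 2 + s ^ 2) <= 2 * c * k * (1 - k) -> 0 <= curvature x.
Proof.
  intros Hx Hr. unfold curvature.
  pose proof (sqmod_z_pos x ltac:(lra)). pose proof (sqmod_one_minus_z_pos x ltac:(lra)).
  assert (0 < c ^ 2 + s ^ 2) by (apply sum_sq_pos; now left).
  assert (0 <= 2 * c * k * (1 - k)) by (repeat apply Rmult_le_pos; lra).
  apply Rdiv_le_0_compat; [| nra].
  apply Rmult_le_pos; [lra |].
  set (rho := c ^ 2 + s ^ 2) in *.
  destruct (Rle_lt_dec 0 (1 - 2 * k)).
  - assert (0 <= (r - x) * ((1 - 2 * k) * rho)) by (apply Rmult_le_pos; nra). nra.
  - assert (0 <= x * ((2 * k - 1) * rho)) by (apply Rmult_le_pos; nra). nra.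
Qed.

Lemma slope_tail_deriv_nonneg r v : 0 < r -> 0 <= v -> r * v <= 1 ->
  2 * c * k * (1 - k) < r * (1 - 2 * k) * (c ^ 2 + s ^ 2) -> 0 <= slope_tail_deriv v.
Proof.
  intros Hr Hv Hrv Hfar. unfold slope_tail_deriv.
  assert (0 < ((1 - k) * v + c) ^ 2 + s ^ 2) by (apply sum_sq_pos; now right).
  assert (0 < (k * v - c) ^ 2 + s ^ 2) by (apply sum_sq_pos; now right).
  assert (0 <= 2 * c * k * (1 - k)) by (repeat apply Rmult_le_pos; lra).
  apply Rdiv_le_0_compat; [| nra].
  apply Rmult_le_pos; nra.
Qed.

Lemma slope_nonneg r : 0 <= r -> 0 < c * PI + s * L -> ln k <= L + ln (1 - k) ->
  0 <= slope r.
Proof.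
  intros Hr Hinf Hzero.
  destruct (Rle_lt_dec (r * (1 - 2 * k) * (c ^ 2 + s ^ 2)) (2 * c * k * (1 - k)))
    as [Hnear | Hfar].
  - enough (slope 0 <= slope r) by (rewrite slope_0 in *; nra).
    apply (is_derive_nonneg_le _ curvature); [lra | |].
    + intros x Hx. apply is_derive_slope. lra.
    + intros x Hx. now apply (curvature_nonneg r).
  - assert (Hr0 : 0 < r).
    { destruct Hr as [| <-]; [easy |].
      assert (0 <= 2 * c * k * (1 - k)) by (repeat apply Rmult_le_pos; lra). lra. }
    rewrite slope_inv by exact Hr0.
    enough (slope_tail 0 <= slope_tail (/ r)) by (rewrite slope_tail_0 in *; lra).
    pose proof (Rinv_0_lt_compat r Hr0).
    apply (is_derive_nonneg_le _ slope_tail_deriv); [lra | |].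
    + intros v Hv. apply is_derive_slope_tail. lra.
    + intros v Hv. apply (slope_tail_deriv_nonneg r); try lra.
      replace 1 with (r * / r) by (field; lra). apply Rmult_le_compat_l; lra.
Qed.

Lemma im_ray_nonneg r : 0 <= r -> 0 < c * PI + s * L -> ln k <= L + ln (1 - k) ->
  0 <= im_ray r.
Proof.
  intros Hr Hinf Hzero. rewrite <- im_ray_0.
  apply (is_derive_nonneg_le _ slope); [exact Hr | |].
  - intros x Hx. apply is_derive_im_ray. lra.
  - intros x Hx. apply slope_nonneg; lra.
Qed.

End Ray.

Lemma Im_Ffun_contour k phi lam r : 0 < 1 - k + r * cos phi ->
  Im (Ffun (contour k phi r) lam) = im_ray k (cos phi) (sin phi) (ln lam) r.
Proof.
  intros Hz. unfold Ffun, contour, im_ray, log_modulus_gap, arg_one_minus.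
  replace (Cminus (RtoC 1) _) with ((k - r * cos phi, - (r * sin phi)) : C)
    by (apply injective_projections; simpl; ring).
  change (Im (Cplus (Cplus ?a ?b) ?d)) with (Im a + Im b + Im d).
  rewrite !Im_mult_Clog, (Carg_re_pos (1 - k + r * cos phi)) by exact Hz.
  replace ((- (r * sin phi)) ^ 2) with ((r * sin phi) ^ 2) by ring.
  simpl. field.
Qed.

Lemma contour_angle_bounds phi L :
  (0 <= L -> 0 < phi < PI / 2) -> (L < 0 -> 0 < phi < atan (PI / Rabs L)) ->
  0 < phi < PI / 2.
Proof.
  intros Hpos Hneg. destruct (Rle_lt_dec 0 L) as [HL | HL]; [now apply Hpos |].
  pose proof (atan_bound (PI / Rabs L)). specialize (Hneg HL). lra.
Qed.

Lemma cos_PI_add_sin_ln_pos phi L :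
  (0 <= L -> 0 < phi < PI / 2) -> (L < 0 -> 0 < phi < atan (PI / Rabs L)) ->
  0 < cos phi * PI + sin phi * L.
Proof.
  intros Hpos Hneg. pose proof (contour_angle_bounds phi L Hpos Hneg) as Hphi.
  assert (Hc : 0 < cos phi) by (apply cos_gt_0; lra).
  assert (Hs : 0 < sin phi) by (apply sin_gt_0; lra).
  pose proof PI_RGT_0.
  destruct (Rle_lt_dec 0 L) as [HL | HL]; [nra |].
  specialize (Hneg HL). pose proof (atan_bound (PI / Rabs L)).
  assert (Htan : tan phi < PI / - L).
  { rewrite <- Rabs_left by exact HL. rewrite <- (tan_atan (PI / Rabs L)).
    apply tan_increasing; lra. }
  unfold tan in Htan.
  apply Rmult_lt_compat_r with (r := cos phi * - L) in Htan; [| nra].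
  replace (sin phi / cos phi * (cos phi * - L)) with (- (sin phi * L)) in Htan by (field; lra).
  replace (PI / - L * (cos phi * - L)) with (cos phi * PI) in Htan by (field; lra).
  lra.
Qed.

Lemma lt_lam_mul_one_minus T lam k : 1 < T -> 1 / (T - 1) <= lam ->
  0 < k < / T -> k < lam * (1 - k).
Proof.
  intros HT Hlam [Hk HkT].
  apply Rmult_lt_compat_r with (r := T) in HkT; [| lra].
  rewrite Rinv_l in HkT by lra.
  apply Rmult_le_compat_r with (r := 1 - k) in Hlam; [| nra].
  enough (k < 1 / (T - 1) * (1 - k)) by lra.
  apply Rmult_lt_reg_l with (T - 1); [lra |].
  replace ((T - 1) * (1 / (T - 1) * (1 - k))) with (1 - k) by (field; lra). nra.
Qed.

Theorem lemma4p5 (delta t lam k phi r : R) :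
  0 < delta < 1 ->
  1 < t ->
  1 / (Rpower t (1 - delta) - 1) <= lam ->
  lam <= Rpower t (1 - delta) - 1 ->
  0 < k < Rpower t (delta - 1) ->
  (0 <= ln lam -> 0 < phi < PI / 2) ->
  (ln lam < 0 -> 0 < phi < atan (PI / Rabs (ln lam))) ->
  0 <= r ->
  0 <= Im (Ffun (contour k phi r) lam).
Proof.
  intros Hdelta Ht Hlam _ Hk Hphi_nonneg Hphi_neg Hr.
  replace (delta - 1) with (- (1 - delta)) in Hk by ring. rewrite Rpower_Ropp in Hk.
  set (T := Rpower t (1 - delta)) in *.
  assert (HT : 1 < T) by (rewrite <- (Rpower_O t) by lra; apply Rpower_lt; lra).
  assert (Hk1 : k < 1)
    by (pose proof (Rinv_1_lt_contravar 1 T (Rle_refl 1) HT); rewrite Rinv_1 in *; lra).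
  assert (Hlam_pos : 0 < lam)
    by (pose proof (Rdiv_lt_0_compat 1 (T - 1) Rlt_0_1 ltac:(lra)); lra).
  pose proof (lt_lam_mul_one_minus T lam k HT Hlam Hk).
  pose proof (contour_angle_bounds phi _ Hphi_nonneg Hphi_neg).
  assert (Hc : 0 < cos phi) by (apply cos_gt_0; lra).
  assert (Hs : 0 < sin phi) by (apply sin_gt_0; lra).
  rewrite Im_Ffun_contour by nra.
  apply im_ray_nonneg; try lra.
  - now apply cos_PI_add_sin_ln_pos.
  - rewrite <- ln_mult by lra. apply Rlt_le, ln_increasing; lra.
Qed.
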